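(* Let $D$ be a strongly connected digraph, $T$ a DFS tree of $D$ rooted at $r$ of length $t\ge 1$ with levels $V_0,\ldots,V_t$, and let $G^D$ be the backward spine of $D$ relative to $T$. If $c'$ is a proper coloring of $G^D$ with $\chi(G^D)$ colors, then the map $c$ on $V(D)$ defined by $c(v)=c'(V_i)$ for $v\in V_i$ is an acyclic coloring of $D$. In particular, $\chi_A(D)\le\chi(G^D)$.
   Context: Digraphs are finite and loopless; paths and cycles are directed; $l(\cdot)$ denotes length. A DFS tree $T$ of a strongly connected digraph $D$ rooted at $r$ is the spanning out-branching produced by a depth-first search started at $r$. $P_u$ is the unique $ru$-path in $T$; the length $t$ of $T$ is the length of a longest path in $T$; the levels are $V_i=\{u: l(P_u)=i\}$, $0\le i\le t$. A vertex $u$ is a descendant of $v$ if $T$ has a $vu$-path; an arc $(u,v)$ is a backward arc if $u$ is a descendant of $v$. The backward spine $G^D$ is the undirected graph with vertex set $\{V_0,\ldots,V_t\}$ in which, for $i>j$, $V_iV_j$ is an edge iff there is a backward arc $(u,v)$ with $u\in V_i$, $v\in V_j$. An acyclic coloring is a coloring whose color classes induce no directed cycle; $\chi_A$ is the minimum number of colors in such a coloring. *)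

From Stdlib Require Import Relations.
From mathcomp Require Import all_boot.
Set Implicit Arguments. Unset Strict Implicit. Unset Printing Implicit Defensive.

Definition loopless (V : finType) (e : rel V) := irreflexive e.
Definition strongly_connected (V : finType) (e : rel V) := forall u v, connect e u v.

(* Depth-first search, modeled operationally: a state is
   (stack (top first), visited set, set of tree arcs). *)
Definition dfs_state (V : finType) := (seq V * {set V} * {set V * V})%type.

Inductive dfs_step (V : finType) (e : rel V) : dfs_state V -> dfs_state V -> Prop :=
| dfs_discover u s (vis : {set V}) (A : {set V * V}) w :
    e u w -> w \notin vis ->
    dfs_step e (u :: s, vis, A) (w :: u :: s, w |: vis, (u, w) |: A)
| dfs_retreat u s (vis : {set V}) (A : {set V * V}) :
    (forall w, e u w -> w \in vis) ->
    dfs_step e (u :: s, vis, A) (s, vis, A).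

Definition dfs_tree (V : finType) (e : rel V) (r : V) (T : {set V * V}) :=
  exists vis : {set V}, clos_refl_trans _ (@dfs_step V e)
                ([:: r], [set r], set0) ([::], vis, T).

Definition tarc (V : finType) (T : {set V * V}) : rel V := fun x y => (x, y) \in T.

Definition tree_length (V : finType) (T : {set V * V}) (t : nat) :=
  (exists x (p : seq V), path (tarc T) x p /\ size p = t) /\
  (forall x (p : seq V), path (tarc T) x p -> size p <= t).

Definition in_level (V : finType) (T : {set V * V}) (r : V) (i : nat) (u : V) :=
  exists p : seq V, path (tarc T) r p /\ last r p = u /\ size p = i.

Definition descendant (V : finType) (T : {set V * V}) (u v : V) :=
  connect (tarc T) v u.

Definition backward_arc (V : finType) (e : rel V) (T : {set V * V}) (u v : V) :=
  e u v /\ descendant T u v.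

Definition backward_spine (V : finType) (e : rel V) (T : {set V * V}) (r : V)
  (t : nat) (i j : 'I_t.+1) : Prop :=
  exists u v, backward_arc e T u v /\
    ((j < i /\ in_level T r i u /\ in_level T r j v) \/
     (i < j /\ in_level T r j u /\ in_level T r i v)).

Definition proper_coloring (I : finType) (E : I -> I -> Prop) (k : nat)
  (c : I -> 'I_k) := forall i j, E i j -> c i <> c j.

Definition chromatic_number (I : finType) (E : I -> I -> Prop) (k : nat) :=
  (exists c : I -> 'I_k, proper_coloring E c) /\
  (forall m, m < k -> ~ exists c : I -> 'I_m, proper_coloring E c).

Definition dcycle (V : finType) (e : rel V) (s : seq V) :=
  s <> [::] /\ uniq s /\ cycle e s.

Definition acyclic_coloring (V : finType) (e : rel V) (k : nat) (c : V -> 'I_k) :=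
  forall s : seq V, dcycle e s -> ~ (forall x y, x \in s -> y \in s -> c x = c y).

Definition acyclic_chromatic_number (V : finType) (e : rel V) (k : nat) :=
  (exists c : V -> 'I_k, acyclic_coloring e c) /\
  (forall m, m < k -> ~ exists c : V -> 'I_m, acyclic_coloring e c).

Arguments backward_spine {V} e T r t i j.

(* Listing the vertices in decreasing order of DFS finishing time, every arc
   (x, y) is either backward (x is a descendant of y in T) or goes forward in
   the list.  A backward arc leaves a strictly deeper level (D is loopless) for
   a shallower one, i.e. it yields an edge of the backward spine, so its ends
   get different colours under c.  Hence the arcs inside a colour class all go
   forward in the list, and no colour class contains a directed cycle. *)

From Stdlib Require Import Relations.
From mathcomp Require Import all_boot.
Set Implicit Arguments. Unset Strict Implicit. Unset Printing Implicit Defensive.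

Lemma acyclic_coloring_rank (V : finType) (e : rel V) (k : nat)
    (c : V -> 'I_k) (rank : V -> nat) :
  (forall x y, e x y -> c x = c y -> rank x < rank y) -> acyclic_coloring e c.
Proof.
move=> mono_rank s [s_ne [_]].
case: s s_ne => [//|x0 s] _ cyc monochrome.
have ltr_trans : transitive (fun a b => rank a < rank b).
  by move=> b a d; exact: ltn_trans.
have rank_path : path (fun a b => rank a < rank b) x0 (rcons s x0).
  apply: (@sub_in_path _ (mem (x0 :: s)) e) cyc; last first.
    by apply/allP => z; rewrite in_cons mem_rcons in_cons orbA orbb -in_cons.
  move=> a b a_s b_s /mono_rank; apply.
  by rewrite (monochrome a x0 a_s (mem_head _ _)) (monochrome b x0 b_s (mem_head _ _)).
move/allP/(_ x0): (order_path_min ltr_trans rank_path).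
by rewrite mem_rcons mem_head ltnn => /(_ isT).
Qed.

Lemma acyclic_chromatic_number_le (V : finType) (e : rel V) (k kA : nat)
    (c : V -> 'I_k) :
  acyclic_coloring e c -> acyclic_chromatic_number e kA -> kA <= k.
Proof.
move=> c_acyclic [_ kA_min]; rewrite leqNgt; apply/negP => lt_k.
by apply: (kA_min k lt_k); exists c.
Qed.

Lemma connect_tarc_subset (V : finType) (A B : {set V * V}) x y :
  A \subset B -> connect (tarc A) x y -> connect (tarc B) x y.
Proof.
move=> sAB; apply: connect_sub => a b ab; apply: connect1.
by rewrite /tarc (subsetP sAB).
Qed.

Section DepthFirstSearch.

Variables (V : finType) (e : rel V) (r : V).
Hypothesis e_irr : irreflexive e.

(* F lists the vertices already popped from the stack, the most recently
   popped first. *)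
Definition dfs_invariant (st : dfs_state V) : Prop :=
  let: (stk, vis, A) := st in
  exists F : seq V,
  [/\ uniq (stk ++ F), vis =i stk ++ F, sorted (descendant A) stk,
      r \in vis & {in vis, forall x, connect (tarc A) r x}] /\
  {in F, forall x y, e x y ->
     [/\ y \in vis & descendant A x y \/ (y \in F /\ index x F < index y F)]}.

Lemma dfs_invariant0 : dfs_invariant ([:: r], [set r], set0).
Proof.
exists [::]; split=> //; split=> //.
- by move=> x; rewrite in_set1 in_cons orbF.
- by rewrite in_set1.
- by move=> x; rewrite in_set1 => /eqP ->.
Qed.

Lemma dfs_discover_invariant u s (vis : {set V}) (A : {set V * V}) w :
  e u w -> w \notin vis -> dfs_invariant (u :: s, vis, A) ->
  dfs_invariant (w :: u :: s, w |: vis, (u, w) |: A).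
Proof.
move=> euw w_vis [F [[Fu Fvis Fsort r_vis Freach] Farcs]].
have grow x y : connect (tarc A) x y -> connect (tarc ((u, w) |: A)) x y.
  exact/connect_tarc_subset/subsetUr.
have wu : descendant ((u, w) |: A) w u by apply: connect1; rewrite /tarc setU11.
have u_vis : u \in vis by rewrite Fvis mem_head.
exists F; split; [split|].
- by rewrite cat_cons cons_uniq -Fvis w_vis.
- by move=> x; rewrite in_setU1 Fvis.
- by rewrite /= wu; apply: sub_path Fsort => a b /grow.
- by rewrite in_setU1 r_vis orbT.
- move=> x; rewrite in_setU1 => /predU1P [->|/Freach/grow //].
  exact: connect_trans (grow _ _ (Freach u u_vis)) wu.
- move=> x x_F y exy; have [y_vis back_fwd] := Farcs x x_F y exy.
  split; first by rewrite in_setU1 y_vis orbT.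
  by case: back_fwd => [/grow|]; [left|right].
Qed.

Lemma dfs_retreat_invariant u s (vis : {set V}) (A : {set V * V}) :
  (forall w, e u w -> w \in vis) -> dfs_invariant (u :: s, vis, A) ->
  dfs_invariant (s, vis, A).
Proof.
move=> u_done [F [[Fu Fvis Fsort r_vis Freach] Farcs]].
have perm_u : perm_eq (u :: s ++ F) (s ++ u :: F) by rewrite -cat1s perm_catCA.
have u_F : u \notin F.
  by move: Fu; rewrite cat_cons cons_uniq mem_cat negb_or => /andP [/andP [_ ->]].
have u_neq z : z \in F -> (u == z) = false.
  by move=> z_F; apply/negbTE; apply: contraNneq u_F => ->.
have descendant_trans : transitive (descendant A).
  by move=> b a d ab bd; exact: connect_trans bd ab.
exists (u :: F); split; [split|] => //.
- by rewrite -(perm_uniq perm_u).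
- by move=> x; rewrite Fvis (perm_mem perm_u).
- exact: path_sorted Fsort.
move=> x; rewrite in_cons => /predU1P [-> {x}|x_F] y exy.
- split; first exact: u_done.
  have := u_done y exy; rewrite Fvis in_cons mem_cat => /or3P [/eqP yu|y_s|y_F].
  + by rewrite yu e_irr in exy.
  + by left; move/allP/(_ y y_s): (order_path_min descendant_trans Fsort).
  + right; rewrite in_cons y_F orbT /index /=.
    by rewrite eqxx u_neq.
- have [y_vis [back|[y_F lt_xy]]] := Farcs x x_F y exy; split=> //; first by left.
  right; rewrite in_cons y_F orbT /index /=.
  by rewrite !u_neq.
Qed.

Lemma dfs_run_invariant st st' :
  clos_refl_trans _ (@dfs_step V e) st st' -> dfs_invariant st -> dfs_invariant st'.
Proof.
elim=> {st st'} [_ _ []|//|st st' st'' _ IH _ IH' /IH/IH' //].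
- exact: dfs_discover_invariant.
- exact: dfs_retreat_invariant.
Qed.

Lemma dfs_tree_order (T : {set V * V}) :
  strongly_connected e -> dfs_tree e r T ->
  (forall x, connect (tarc T) r x) /\
  exists F : seq V, forall x y, e x y -> descendant T x y \/ index x F < index y F.
Proof.
move=> strong [vis run].
have [F [[_ Fvis _ r_vis Freach] Farcs]] := dfs_run_invariant run dfs_invariant0.
have all_F x : x \in F.
  have /connectP [p p_e ->] := strong r x.
  elim: p r r_vis p_e => [|y p IH] a a_vis /= => [|/andP [ay p_e]].
    by rewrite -[F]/([::] ++ F) -Fvis.
  by apply: IH p_e; have [] := Farcs a _ y ay; rewrite -?Fvis.
split=> [x|]; first by apply: Freach; rewrite Fvis.
exists F => x y /(Farcs x (all_F x)) [_ [|[]]]; by [left|right].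
Qed.

End DepthFirstSearch.

Section BackwardSpine.

Variables (V : finType) (e : rel V) (r : V) (T : {set V * V}) (t : nat).
Hypotheses (e_irr : irreflexive e) (T_length : tree_length T t).

Lemma backward_arc_spine_edge x y :
  connect (tarc T) r y -> backward_arc e T x y ->
  exists i j : 'I_t.+1,
    [/\ backward_spine e T r t i j, in_level T r i x & in_level T r j y].
Proof.
move=> /connectP [p p_T y_p] [exy /connectP [q q_T x_q]].
have q_ne : 0 < size q by case: q q_T x_q => [|z q] //= _ xy; rewrite xy e_irr in exy.
have pq_T : path (tarc T) r (p ++ q) by rewrite cat_path p_T -y_p q_T.
have [_ longest] := T_length.
have lt_i : size (p ++ q) < t.+1 by rewrite ltnS; exact: longest pq_T.
have lt_j : size p < t.+1 by rewrite ltnS; exact: longest p_T.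
have x_lvl : in_level T r (Ordinal lt_i) x by exists (p ++ q); rewrite last_cat -y_p.
have y_lvl : in_level T r (Ordinal lt_j) y by exists p.
exists (Ordinal lt_i), (Ordinal lt_j); split=> //.
exists x, y; split; first by split=> //; apply/connectP; exists q.
by left; split=> //=; rewrite size_cat -[X in X < _]addn0 ltn_add2l.
Qed.

Lemma spine_coloring_not_backward k (c' : 'I_t.+1 -> 'I_k) (c : V -> 'I_k) x y :
  proper_coloring (backward_spine e T r t) c' ->
  (forall v (i : 'I_t.+1), in_level T r i v -> c v = c' i) ->
  connect (tarc T) r y -> e x y -> c x = c y -> ~ descendant T x y.
Proof.
move=> c'_proper c_levels r_y exy cxy y_x.
have [i [j [ij x_i y_j]]] := backward_arc_spine_edge r_y (conj exy y_x).
by apply: (c'_proper i j ij); rewrite -(c_levels x i x_i) -(c_levels y j y_j).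
Qed.

End BackwardSpine.

Theorem mainTheorem9 (V : finType) (e : rel V) (r : V) (T : {set V * V})
  (t k : nat) (c' : 'I_t.+1 -> 'I_k) (c : V -> 'I_k) :
  loopless e -> strongly_connected e -> dfs_tree e r T ->
  tree_length T t -> 1 <= t ->
  chromatic_number (backward_spine e T r t) k ->
  proper_coloring (backward_spine e T r t) c' ->
  (forall (v : V) (i : 'I_t.+1), in_level T r i v -> c v = c' i) ->
  acyclic_coloring e c /\
  (forall kA, acyclic_chromatic_number e kA -> kA <= k).
Proof.
move=> e_irr strong dfs T_length _ _ c'_proper c_levels.
have [reach [F arcs]] := dfs_tree_order e_irr strong dfs.
have c_acyclic : acyclic_coloring e c.
  apply: (acyclic_coloring_rank (rank := index^~ F)) => x y exy cxy.
  have [y_x|//] := arcs x y exy.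
  by case: (spine_coloring_not_backward e_irr T_length c'_proper c_levels
               (reach y) exy cxy).
by split=> // kA; apply: acyclic_chromatic_number_le c_acyclic.
Qed.
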